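(* Let $G=\langle A\cup B\rangle$ be a CS group, let $g=({}^{a_0}b_0)\cdots({}^{a_{n-1}}b_{n-1})a_n\in G$ with $a_i\in A$, $b_i\in B$, and let $x\in X$ with $\ell:=\ell_g(x)<\infty$ such that $n=\mathrm{syl}(g\|_x)=\mathrm{syl}(g)$. Then for every $i\in\{0,\dots,n-1\}$ we have $a_i^{-1}a_na_i\in\mathfrak C(a_n,x)$, and there are integers $j(i)$ ($i=0,\dots,n-1$) such that $$g\|_x=\prod_{j=0}^{\ell-1}\ \prod_{i=0}^{n-1} b_i\big|_{0.(a_i^{-1}a_n^{\,j+j(i)}a_i)},$$ where the outer product is ordered by increasing $j$ and the inner one by increasing $i$.
   Context: Let $X$ be a nonempty set (possibly infinite) with distinguished letter $0$, $\dot X=X\setminus\{0\}$. $X^*$ is the free monoid on $X$ (concatenation $\star$) viewed as a rooted tree; $\mathrm{Aut}(X^* )$ acts on the right ($v\mapsto v.g$; $gh$ = first $g$ then $h$); ${}^hg=hgh^{-1}$; sections $g|_u$ are defined by $(u\star v).g=u.g\star v.(g|_u)$; elements of $\mathrm{Sym}(X)$ are identified with rooted automorphisms $(x\star v).\rho=x.\rho\star v$; $\mathrm{St}(1)$ is the first layer stabiliser. $\ell_g(v)$ is the length of the $\langle g\rangle$-orbit of $v$, and $g\|_v:=g^{\ell_g(v)}|_v$ when finite. A constant spinal (CS) group is $G=\langle A\cup B\rangle$ with $A\le\mathrm{Sym}(X)$ transitive and $B\le\mathrm{St}(1)$ such that $b|_0=b$ for all $b\in B$ and the elements $b|_x$ ($b\in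 B$, $x\in\dot X$) lie in $A$ and generate $A$. $\mathrm{syl}(g)$ is the least $n$ such that $g=({}^{a_0}b_0)\cdots({}^{a_{n-1}}b_{n-1})a_n$ with $a_i\in A$, $b_i\in B$. For $x\in X$ let $\mathrm{mp}_A(0,x)=\{c\in A:0.c=x\}$, and for $a\in A$ let $\mathfrak C(a,x)=\{cac^{-1}: c\in\mathrm{mp}_A(0,x)\}$. *)

(* Automorphisms of the rooted tree X^* for an arbitrary
   (possibly infinite) alphabet X : Type, with right action v.g = fwd g v. *)
From mathcomp Require Import all_boot all_order all_algebra.
Set Implicit Arguments. Unset Strict Implicit. Unset Printing Implicit Defensive.

Section TreeAut.
Variable X : Type.

Record aut := Aut {
  fwd : seq X -> seq X;
  bwd : seq X -> seq X;
  fwdK : cancel fwd bwd;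
  bwdK : cancel bwd fwd;
  fwd_size : forall v, size (fwd v) = size v;
  fwd_pre : forall u v, take (size u) (fwd (u ++ v)) = fwd u }.

Lemma pre_cat (g : aut) u v :
  fwd g (u ++ v) = fwd g u ++ drop (size u) (fwd g (u ++ v)).
Proof. by rewrite -{1}(cat_take_drop (size u) (fwd g (u ++ v))) fwd_pre. Qed.

Lemma bwd_size (g : aut) w : size (bwd g w) = size w.
Proof. by rewrite -{2}(bwdK g w) fwd_size. Qed.

Lemma bwd_pre (g : aut) u v : take (size u) (bwd g (u ++ v)) = bwd g u.
Proof.
set t := bwd g (u ++ v).
have st : size (take (size u) t) = size u.
  by rewrite size_takel // /t bwd_size size_cat leq_addr.
have := fwd_pre g (take (size u) t) (drop (size u) t).
rewrite cat_take_drop st /t bwdK take_size_cat // => h.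
by apply: (can_inj (fwdK g)); rewrite bwdK -h.
Qed.

Lemma bwd_cat (g : aut) u v :
  bwd g (u ++ v) = bwd g u ++ drop (size u) (bwd g (u ++ v)).
Proof. by rewrite -{1}(cat_take_drop (size u) (bwd g (u ++ v))) bwd_pre. Qed.

(* product gh = first g, then h *)
Definition autmul (g h : aut) : aut.
Proof.
refine (@Aut (fun v => fwd h (fwd g v)) (fun w => bwd g (bwd h w)) _ _ _ _).
- by move=> v; rewrite !fwdK.
- by move=> v; rewrite !bwdK.
- by move=> v; rewrite !fwd_size.
- move=> u v; rewrite pre_cat -(fwd_size g u) fwd_pre //.
Defined.

Definition autinv (g : aut) : aut :=
  @Aut (bwd g) (fwd g) (bwdK g) (fwdK g) (@bwd_size g) (@bwd_pre g).

Definition aut1 : aut.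
Proof.
refine (@Aut id id (fun _ => erefl) (fun _ => erefl) (fun _ => erefl) _).
by move=> u v; rewrite take_size_cat.
Defined.

(* the section g|_u, defined by (u ++ v).g = u.g ++ v.(g|_u) *)
Definition section (g : aut) (u : seq X) : aut.
Proof.
refine (@Aut (fun v => drop (size u) (fwd g (u ++ v)))
             (fun w => drop (size u) (bwd g (fwd g u ++ w))) _ _ _ _).
- by move=> v /=; rewrite -pre_cat fwdK drop_size_cat.
- move=> w /=.
  have e : u ++ drop (size u) (bwd g (fwd g u ++ w)) = bwd g (fwd g u ++ w).
    by rewrite [RHS]bwd_cat fwdK fwd_size.
  by rewrite e bwdK drop_size_cat // fwd_size.
- by move=> v; rewrite size_drop fwd_size size_cat addKn.
- move=> v w /=; rewrite catA take_drop -(fwd_pre g (u ++ v) w) size_cat addnC.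
  by [].
Defined.

Definition expn (g : aut) (n : nat) : aut := iter n (autmul g) aut1.
Definition zpow (g : aut) (k : int) : aut :=
  match k with Posz m => expn g m | Negz m => autinv (expn g m.+1) end.

Definition conj (h g : aut) : aut := autmul (autmul h g) (autinv h).

Definition lact (g : aut) (y : X) : X := head y (fwd g [:: y]).

Definition orbit_len (g : aut) (v : seq X) (l : nat) : Prop :=
  [/\ 0 < l, fwd (expn g l) v = v &
      forall k, 0 < k < l -> fwd (expn g k) v <> v].

(* g||_x := g^{l_g(x)}|_x, where l = l_g(x) *)
Definition stab_section (g : aut) (x : X) (l : nat) : aut :=
  section (expn g l) [:: x].

Inductive gen (S : aut -> Prop) : aut -> Prop :=
| gen_one : gen S aut1
| gen_base g : S g -> gen S g
| gen_mul g h : gen S g -> gen S h -> gen S (autmul g h)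
| gen_inv g : gen S g -> gen S (autinv g).

Definition subgroup (H : aut -> Prop) : Prop :=
  [/\ H aut1, forall g h, H g -> H h -> H (autmul g h) & forall g, H g -> H (autinv g)].

(* rooted automorphisms = elements of Sym(X) *)
Definition rooted (g : aut) : Prop :=
  forall y v, fwd g (y :: v) = fwd g [:: y] ++ v.

Definition in_St1 (g : aut) : Prop := forall y, fwd g [:: y] = [:: y].

(* constant spinal group data (A, B) with distinguished letter x0 *)
Definition CS (x0 : X) (A B : aut -> Prop) : Prop :=
  [/\ subgroup A, (forall a, A a -> rooted a) &
      (forall y z, exists a, A a /\ lact a y = z)] /\
  [/\ subgroup B, (forall b, B b -> in_St1 b) &
      (forall b, B b -> section b [:: x0] = b)] /\
  (forall b y, B b -> y <> x0 -> A (section b [:: y])) /\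
  (forall a, A a <-> gen (fun c => exists b y, [/\ B b, y <> x0 &
                                        c = section b [:: y]]) a).

Definition syl_expr (sa sb : seq aut) (an : aut) : aut :=
  foldr (fun ab acc => autmul (conj ab.1 ab.2) acc) an (zip sa sb).

Definition has_syl_expr (A B : aut -> Prop) (h : aut) (n : nat) : Prop :=
  exists sa sb an, [/\ size sa = n, size sb = n,
    (forall i, i < n -> A (nth aut1 sa i)) /\
    (forall i, i < n -> B (nth aut1 sb i)), A an & h = syl_expr sa sb an].

Definition syl (A B : aut -> Prop) (h : aut) (n : nat) : Prop :=
  has_syl_expr A B h n /\ forall m, m < n -> ~ has_syl_expr A B h m.

Definition mp (A : aut -> Prop) (x0 x : X) (c : aut) : Prop :=
  A c /\ lact c x0 = x.
Definition frakC (A : aut -> Prop) (x0 : X) (a : aut) (x : X) (z : aut) : Prop :=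
  exists c, mp A x0 x c /\ z = autmul (autmul c a) (autinv c).

End TreeAut.

Arguments aut1 {X}.

(* Every b in B fixes the first level, so g acts on letters as a_n, and its section at y is the
   product of the b_i|_{y.a_i}.  Hence g||_x = g^l|_x is the product, over the orbit points
   x.a_n^j (j < l) and i < n, of the letters b_i|_{(x.a_n^j).a_i}.  Such a letter is b_i itself
   when (x.a_n^j).a_i = 0 and lies in A otherwise; as the orbit points are distinct, each i
   yields at most one letter from B.  Absorbing the letters from A into the conjugators writes
   g||_x with as many syllables as letters from B, so syl(g||_x) = n forces every i to send
   exactly one orbit point x.a_n^{j_i} to 0.  The conjugator a_i^-1 a_n^{l - j_i} then gives
   both the membership in C(a_n, x) and the exponents j(i) = l - j_i. *)

From Pilot Require Import Defs.
From mathcomp Require Import all_boot all_order all_algebra.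
From Stdlib Require Import FunctionalExtensionality ProofIrrelevance ClassicalEpsilon.
Set Implicit Arguments. Unset Strict Implicit. Unset Printing Implicit Defensive.

Section TreeAutomorphisms.
Variable X : Type.
Implicit Types (g h a b : aut X) (y : X).

Lemma aut_ext g h : fwd g =1 fwd h -> g = h.
Proof.
case: g h => f1 b1 p1 q1 r1 s1 [f2 b2 p2 q2 r2 s2] /= /functional_extensionality ef.
subst f2; have eb : b1 = b2.
  by apply: functional_extensionality => w; rewrite -[w in b1 w](q2 w) p1.
by subst b2; f_equal; apply: proof_irrelevance.
Qed.

Lemma autmulA g h (k : aut X) : autmul (autmul g h) k = autmul g (autmul h k).
Proof. exact: aut_ext. Qed.

Lemma autmul1g g : autmul aut1 g = g.
Proof. exact: aut_ext. Qed.

Lemma autmulg1 g : autmul g aut1 = g.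
Proof. exact: aut_ext. Qed.

Lemma fwd_letter g y : fwd g [:: y] = [:: lact g y].
Proof. by rewrite /lact; have := fwd_size g [:: y]; case: (fwd g [:: y]) => [|z []]. Qed.

Lemma fwd_cons g y v : fwd g (y :: v) = lact g y :: fwd (section g [:: y]) v.
Proof. by rewrite -cat1s pre_cat fwd_letter. Qed.

Lemma lact_autmul g h y : lact (autmul g h) y = lact h (lact g y).
Proof. by rewrite /lact /= !fwd_letter. Qed.

Lemma lact_autinvK g y : lact (autinv g) (lact g y) = y.
Proof. by rewrite /lact /= -fwd_letter fwdK. Qed.

Lemma lact_inj g : injective (lact g).
Proof. exact: can_inj (lact_autinvK g). Qed.

Lemma iter_lact_inj g k : injective (iter k (lact g)).
Proof. by elim: k => [|k IH] y z //= /(@lact_inj g) /IH. Qed.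

Lemma section_autmul g h y :
  section (autmul g h) [:: y] = autmul (section g [:: y]) (section h [:: lact g y]).
Proof. by apply: aut_ext => v /=; rewrite fwd_cons /= !drop0 fwd_cons /= drop0. Qed.

Lemma rooted_section a y : rooted a -> section a [:: y] = aut1.
Proof. by move=> ra; apply: aut_ext => v /=; rewrite ra drop_size_cat // fwd_letter. Qed.

Lemma rooted_autinv a : rooted a -> rooted (autinv a).
Proof.
move=> ra y v /=; have e : bwd a [:: y] = [:: lact (autinv a) y] := fwd_letter (autinv a) y.
by apply: (can_inj (fwdK a)); rewrite bwdK e ra -e bwdK.
Qed.

Lemma in_St1_lact b y : in_St1 b -> lact b y = y.
Proof. by rewrite /lact => ->. Qed.

Lemma conj_section a b y : rooted a ->
  section (conj a b) [:: y] = section b [:: lact a y].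
Proof.
move=> ra; rewrite /conj !section_autmul (rooted_section _ ra).
by rewrite (rooted_section _ (rooted_autinv ra)) autmul1g autmulg1.
Qed.

Lemma conj_lact a b y : in_St1 b -> lact (conj a b) y = y.
Proof. by move=> b1; rewrite /conj !lact_autmul (in_St1_lact _ b1) lact_autinvK. Qed.

Lemma fwd_expn g k v : fwd (Defs.expn g k) v = iter k (fwd g) v.
Proof. by elim: k v => [|k IH] v //=; rewrite IH -iterSr. Qed.

Lemma lact_expn g k y : lact (Defs.expn g k) y = iter k (lact g) y.
Proof. by elim: k y => [|k IH] y //; rewrite [Defs.expn _ _]/= lact_autmul IH -iterSr. Qed.

Lemma zpow_nat g m : zpow g (Posz m) = Defs.expn g m.
Proof. by []. Qed.

Lemma subgroup_expn (H : aut X -> Prop) g k : subgroup H -> H g -> H (Defs.expn g k).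
Proof. by case=> H1 HM _ Hg; elim: k => [|k IH] //; apply: HM. Qed.

Definition autprod (s : seq (aut X)) : aut X := foldr (@autmul X) aut1 s.

Lemma autprod_cat s t : autprod (s ++ t) = autmul (autprod s) (autprod t).
Proof. by elim: s => [|a s IH] /=; rewrite ?autmul1g // IH autmulA. Qed.

Lemma autprod_flatten ss : autprod (flatten ss) = autprod (map autprod ss).
Proof. by elim: ss => [|s ss IH] //=; rewrite autprod_cat IH. Qed.

Lemma section_expn g l y :
  section (Defs.expn g l) [:: y] = autprod [seq section g [:: iter j (lact g) y] | j <- iota 0 l].
Proof.
elim: l y => [|l IH] y; first by apply: aut_ext => v; rewrite /= drop0.
rewrite [Defs.expn _ _]/= section_autmul IH /= (iotaDl 1 0) -map_comp.
by congr (autmul _ (autprod _)); apply: eq_map => j /=; rewrite -iterS iterSr.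
Qed.

End TreeAutomorphisms.

Lemma count_le1 (T : eqType) (p : pred T) s : uniq s ->
  {in s &, forall u v, p u -> p v -> u = v} -> count p s <= 1.
Proof.
move=> us pinj; rewrite -size_filter.
case fs: (filter p s) => [//|u r].
have : u \in filter p s by rewrite fs mem_head.
rewrite mem_filter => /andP[pu su].
have sub : {subset filter p s <= [:: u]}.
  by move=> v; rewrite mem_filter inE => /andP[pv sv]; rewrite (pinj v u).
by have := uniq_leq_size (filter_uniq p us) sub; rewrite fs.
Qed.

Lemma sum_le1_lt (c : nat -> nat) n i0 : i0 < n -> c i0 = 0 ->
  (forall i, i < n -> c i <= 1) -> \sum_(i < n) c i < n.
Proof.
move=> lt_i0 c0 c_le1; rewrite (bigD1 (Ordinal lt_i0)) //= c0 add0n.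
apply: (@leq_ltn_trans (\sum_(i < n | i != Ordinal lt_i0) 1)).
  by apply: leq_sum => i _; apply: c_le1.
by rewrite sum1_card cardC1 card_ord ltn_predL (leq_ltn_trans _ lt_i0).
Qed.

Lemma count_fst_grid (T : Type) (t : nat -> nat -> bool) (F : nat -> nat -> T) l n :
  count fst (flatten [seq [seq (t j i, F j i) | i <- iota 0 n] | j <- iota 0 l])
  = \sum_(i < n) count (t^~ i) (iota 0 l).
Proof.
rewrite count_flatten -map_comp sumnE big_map.
under eq_bigr => j _ do rewrite /= count_map -sum1_count big_mkcond.
rewrite exchange_big /= -{1}(subn0 n) -/(index_iota 0 n) big_mkord.
by apply: eq_bigr => i _; rewrite -sum1_count [RHS]big_mkcond.
Qed.

Definition classicb (P : Prop) : bool := if excluded_middle_informative P then true else false.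

Lemma classicbP (P : Prop) : reflect P (classicb P).
Proof. by rewrite /classicb; case: excluded_middle_informative => p; constructor. Qed.

Section SyllableExpressions.
Variable X : Type.
Implicit Types (a b an t : aut X) (sa sb : seq (aut X)) (y : X).

Lemma syl_expr_cons a b sa sb an :
  syl_expr (a :: sa) (b :: sb) an = autmul (conj a b) (syl_expr sa sb an).
Proof. by []. Qed.

Lemma conj1 t : conj aut1 t = t.
Proof. exact: aut_ext. Qed.

Lemma autmul_syl_expr t sa sb an : autmul t (syl_expr sa sb an) =
  syl_expr [seq autmul t a | a <- sa] sb (autmul t an).
Proof.
elim: sa sb => [|a sa IH] [|b sb] //=.
by rewrite !syl_expr_cons -IH; apply: aut_ext => v /=; rewrite bwdK.
Qed.

Lemma lact_syl_expr sa sb an y : size sa = size sb ->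
  (forall i, i < size sb -> in_St1 (nth aut1 sb i)) ->
  lact (syl_expr sa sb an) y = lact an y.
Proof.
elim: sa sb => [|a sa IH] [|b sb] //= [size_s] sb1.
rewrite lact_autmul conj_lact; last exact: (sb1 0).
by apply: IH => // i; apply: (sb1 i.+1).
Qed.

Lemma section_syl_expr sa sb an y : size sa = size sb ->
  (forall i, i < size sa -> rooted (nth aut1 sa i)) ->
  (forall i, i < size sb -> in_St1 (nth aut1 sb i)) -> rooted an ->
  section (syl_expr sa sb an) [:: y] =
  autprod [seq section (nth aut1 sb i) [:: lact (nth aut1 sa i) y] | i <- iota 0 (size sa)].
Proof.
move=> + + + ran; elim: sa sb y => [|a sa IH] [|b sb] y // => [_ _ _|[size_s] sa_r sb1].
  by rewrite rooted_section.
rewrite syl_expr_cons section_autmul conj_section ?conj_lact; [|exact: (sb1 0)|exact: (sa_r 0)].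
rewrite IH // => [|i|i]; [|exact: (sa_r i.+1)|exact: (sb1 i.+1)].
by rewrite /= (iotaDl 1 0) -map_comp.
Qed.

(* A letter may lie in both A and B; its flag says which of the two it is counted in. *)
Definition letter_over (A B : aut X -> Prop) (q : bool * aut X) : Prop :=
  if q.1 then B q.2 else A q.2.

Fixpoint word_over A B (w : seq (bool * aut X)) : Prop :=
  if w is q :: w' then letter_over A B q /\ word_over A B w' else True.

Lemma word_over_cat A B w1 w2 :
  word_over A B w1 -> word_over A B w2 -> word_over A B (w1 ++ w2).
Proof. by elim: w1 => [_ //|q w1 IH [q_ok w1_ok] w2_ok] /=; split; last exact: IH. Qed.

Lemma word_over_map A B (s : seq nat) (F : nat -> bool * aut X) :
  (forall i, i \in s -> letter_over A B (F i)) -> word_over A B (map F s).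
Proof.
elim: s => [|i s IH] //= F_ok; split; first by apply: F_ok; rewrite mem_head.
by apply: IH => k ks; apply: F_ok; rewrite inE ks orbT.
Qed.

Lemma word_over_flatten A B (s : seq nat) (W : nat -> seq (bool * aut X)) :
  (forall j, j \in s -> word_over A B (W j)) -> word_over A B (flatten (map W s)).
Proof.
elim: s => [|j s IH] //= W_ok; apply: word_over_cat; first by apply: W_ok; rewrite mem_head.
by apply: IH => k ks; apply: W_ok; rewrite inE ks orbT.
Qed.

(* Letters of A are absorbed into the conjugators and the tail, so only the letters of B
   cost a syllable. *)
Lemma word_has_syl_expr A B w : subgroup A -> word_over A B w ->
  has_syl_expr A B (autprod (map snd w)) (count fst w).
Proof.
case=> A1 AM _; elim: w => [_|[[] t] w IH /= [t_ok /IH]].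
  by exists [::], [::], aut1.
all: case=> [sa [sb [an [sa_n sb_n [sa_A sb_B] an_A ->]]]].
- exists (aut1 :: sa), (t :: sb), an; rewrite /= sa_n sb_n syl_expr_cons conj1.
  by split=> //; split=> -[|i] //= lt_i; [apply: sa_A | apply: sb_B].
- exists [seq autmul t a | a <- sa], sb, (autmul t an).
  rewrite size_map autmul_syl_expr; split=> //; [split=> // i lt_i | exact: AM].
  by rewrite (nth_map aut1) ?sa_n //; apply: AM => //; apply: sa_A.
Qed.

End SyllableExpressions.

Section OrbitSections.
Variables (X : Type) (x0 : X) (A B : aut X -> Prop).
Hypotheses (A_group : subgroup A) (A_rooted : forall a, A a -> rooted a)
  (B_St1 : forall b, B b -> in_St1 b)
  (B_section_x0 : forall b, B b -> section b [:: x0] = b)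
  (B_section_A : forall b y, B b -> y <> x0 -> A (section b [:: y])).
Variables (n : nat) (sa sb : seq (aut X)) (an : aut X).
Hypotheses (size_sa : size sa = n) (size_sb : size sb = n)
  (sa_A : forall i, i < n -> A (nth aut1 sa i))
  (sb_B : forall i, i < n -> B (nth aut1 sb i)) (an_A : A an).
Variables (x : X) (l : nat).
Hypothesis orbit_x : orbit_len (syl_expr sa sb an) [:: x] l.

Local Notation a_ i := (nth aut1 sa i).
Local Notation b_ i := (nth aut1 sb i).
Local Notation g := (syl_expr sa sb an).
Local Notation orb j := (iter j (lact an) x).

Lemma iter_lact_syl_expr j y : iter j (lact g) y = iter j (lact an) y.
Proof.
apply: eq_iter => z; apply: lact_syl_expr; rewrite size_sb // => i lt_i.
by apply/B_St1/sb_B.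
Qed.

Lemma orb_period : orb l = x.
Proof. by case: orbit_x => _ + _; rewrite fwd_letter lact_expn iter_lact_syl_expr => -[]. Qed.

Lemma orb_inj j1 j2 : j1 < l -> j2 < l -> orb j1 = orb j2 -> j1 = j2.
Proof.
wlog lt12 : j1 j2 / j1 < j2.
  move=> sym lt1 lt2 e; case: (ltngtP j1 j2) => [lt | lt | //]; first exact: sym.
  by apply/esym/sym.
move=> _ lt2 e; case: orbit_x => _ _ /(_ (j2 - j1)); rewrite subn_gt0 lt12.
rewrite (leq_ltn_trans (leq_subr _ _) lt2) fwd_letter lact_expn iter_lact_syl_expr.
by case=> //; congr [:: _]; apply/(@iter_lact_inj _ an j1); rewrite -iterD subnKC ?e // ltnW.
Qed.

Lemma stab_section_syl_expr : stab_section g x l =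
  autprod (flatten [seq [seq section (b_ i) [:: lact (a_ i) (orb j)] | i <- iota 0 n]
                   | j <- iota 0 l]).
Proof.
rewrite /stab_section section_expn autprod_flatten -map_comp.
congr autprod; apply: eq_map => j /=.
rewrite iter_lact_syl_expr section_syl_expr ?size_sa ?size_sb // => [i|i|].
- by move/sa_A/A_rooted.
- by move/sb_B/B_St1.
- exact: A_rooted.
Qed.

Let hits j i := classicb (lact (a_ i) (orb j) = x0).

Lemma stab_section_has_syl_expr :
  has_syl_expr A B (stab_section g x l) (\sum_(i < n) count (hits^~ i) (iota 0 l)).
Proof.
rewrite -(count_fst_grid hits (fun j i => section (b_ i) [:: lact (a_ i) (orb j)])).
set w := flatten _; suff -> : stab_section g x l = autprod (map snd w).
  apply: word_has_syl_expr => //; apply: word_over_flatten => j _.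
  apply: word_over_map => i; rewrite mem_iota => /andP[_ lt_i].
  rewrite /letter_over /hits /=; case: classicbP => [-> | ne].
    by rewrite B_section_x0 //; apply: sb_B.
  by apply: B_section_A => //; apply: sb_B.
rewrite stab_section_syl_expr /w map_flatten -map_comp; congr (autprod (flatten _)).
by apply: eq_map => j /=; rewrite -map_comp.
Qed.

Lemma count_hits_le1 i : count (hits^~ i) (iota 0 l) <= 1.
Proof.
apply: count_le1 (iota_uniq 0 l) _ => j1 j2; rewrite !mem_iota => /andP[_ lt1] /andP[_ lt2].
move=> /classicbP e1 /classicbP e2; apply: orb_inj => //.
by apply: (@lact_inj _ (a_ i)); rewrite e1 e2.
Qed.

Hypothesis syl_min : forall m, m < n -> ~ has_syl_expr A B (stab_section g x l) m.

Lemma orbit_hits_x0 i : i < n -> has (hits^~ i) (iota 0 l).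
Proof.
move=> lt_i; apply: contraT; rewrite has_count -leqNgt leqn0 => /eqP c0.
have := sum_le1_lt (c := fun i => count (hits^~ i) (iota 0 l)) lt_i c0.
by move=> /(_ (fun i _ => count_hits_le1 i)) /syl_min /(_ stab_section_has_syl_expr).
Qed.

Let first_hit i := find (hits^~ i) (iota 0 l).

Lemma first_hitP i : i < n -> first_hit i < l /\ lact (a_ i) (orb (first_hit i)) = x0.
Proof.
move=> lt_i; have hit := orbit_hits_x0 lt_i.
have lt_hit : first_hit i < l by rewrite -(size_iota 0 l) -has_find.
by split=> //; have /classicbP := nth_find 0 hit; rewrite nth_iota.
Qed.

Lemma conj_an_frakC i : i < n ->
  frakC A x0 an x (autmul (autmul (autinv (a_ i)) an) (a_ i)).
Proof.
move=> lt_i; have [lt_hit hit] := first_hitP lt_i; set k := l - first_hit i.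
exists (autmul (autinv (a_ i)) (Defs.expn an k)); split; first split.
- case: A_group => _ AM AV; apply: AM; first by apply: AV; apply: sa_A.
  exact: subgroup_expn.
- rewrite lact_autmul lact_expn -hit lact_autinvK -iterD subnK ?orb_period //.
  exact: ltnW.
have comm u : fwd an (fwd (Defs.expn an k) u) = fwd (Defs.expn an k) (fwd an u).
  by rewrite !fwd_expn -iterS iterSr.
by apply: aut_ext => v /=; rewrite comm fwdK.
Qed.

Lemma stab_section_formula : exists jf : nat -> int,
  stab_section g x l =
  foldr (@autmul X) aut1
    (flatten [seq [seq section (b_ i)
                      [:: lact (autmul (autmul (autinv (a_ i)) (zpow an (Posz j + jf i)%R))
                                    (a_ i)) x0]
                  | i <- iota 0 n]
             | j <- iota 0 l]).
Proof.
exists (fun i => Posz (l - first_hit i)); rewrite stab_section_syl_expr /autprod.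
congr (foldr _ _ (flatten _)).
apply/eq_in_map => j; rewrite mem_iota => /andP[_ lt_j].
apply/eq_in_map => i; rewrite mem_iota => /andP[_ lt_i].
have [lt_hit hit] := first_hitP lt_i.
rewrite -PoszD zpow_nat !lact_autmul lact_expn -hit lact_autinvK -iterD -addnA subnK.
  by rewrite iterD orb_period.
exact: ltnW.
Qed.

End OrbitSections.

Theorem mainTheorem7 (X : Type) (x0 : X) (A B : aut X -> Prop)
  (hCS : CS x0 A B)
  (n : nat) (sa sb : seq (aut X)) (an : aut X)
  (hsa : size sa = n) (hsb : size sb = n)
  (hA : forall i, (i < n)%N -> A (nth aut1 sa i))
  (hB : forall i, (i < n)%N -> B (nth aut1 sb i))
  (hAn : A an)
  (g : aut X) (hg : g = syl_expr sa sb an)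
  (x : X) (l : nat) (hl : orbit_len g [:: x] l)
  (hsylx : syl A B (stab_section g x l) n)
  (hsylg : syl A B g n) :
  (forall i, (i < n)%N ->
     frakC A x0 an x (autmul (autmul (autinv (nth aut1 sa i)) an) (nth aut1 sa i))) /\
  exists jf : nat -> int,
    stab_section g x l =
    foldr (@autmul X) aut1
      (flatten [seq [seq section (nth aut1 sb i)
                        [:: lact (autmul (autmul (autinv (nth aut1 sa i))
                                           (zpow an (Posz j + jf i)%R))
                                      (nth aut1 sa i)) x0]
                    | i <- iota 0 n]
               | j <- iota 0 l]).
Proof.
case: hCS => [[A_group A_rooted _] [[_ B_St1 B_x0] [B_A _]]].
(* Only the minimality of syl(g||_x) is needed. *)
case: hsylx => _ syl_min; subst g.
have frakC_i := conj_an_frakC A_group A_rooted B_St1 B_x0 B_A hsa hsb hA hB hAn hl syl_min.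
have formula := stab_section_formula A_group A_rooted B_St1 B_x0 B_A hsa hsb hA hB hAn hl syl_min.
by split.
Qed.
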